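(* Let $S$ be a semigroup. Then $S^0$ is finitely right equated if and only if $S$ is finitely right equated and $S=US^1$ for some finite set $U\subseteq S$.
   Context: $S^0$ is $S$ if $S$ has a zero and otherwise $S$ with a zero adjoined; $S^1$ is $S$ if $S$ is a monoid and otherwise $S$ with an identity adjoined. For $a\in S$, $\mathbf{r}_S(a)=\{(s,t)\in S\times S\mid as=at\}$; $S$ is finitely right equated if each $\mathbf{r}_S(a)$ is finitely generated as a right congruence. *)

From Stdlib Require Import List.
Import ListNotations.

Section Defs.
Variable T : Type.
Variable mul : T -> T -> T.

Definition right_congruence (rho : T -> T -> Prop) : Prop :=
  (forall x, rho x x) /\
  (forall x y, rho x y -> rho y x) /\
  (forall x y z, rho x y -> rho y z -> rho x z) /\
  (forall x y c, rho x y -> rho (mul x c) (mul y c)).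

Definition gen_right_congruence (H : list (T * T)) (x y : T) : Prop :=
  forall rho, right_congruence rho ->
    (forall p, In p H -> rho (fst p) (snd p)) -> rho x y.

Definition fg_right_congruence (rho : T -> T -> Prop) : Prop :=
  exists H : list (T * T), forall x y, rho x y <-> gen_right_congruence H x y.

Definition r_ann (a : T) (s t : T) : Prop := mul a s = mul a t.

Definition fin_right_equated : Prop :=
  forall a : T, fg_right_congruence (r_ann a).

Definition is_zero (z : T) : Prop :=
  forall x, mul z x = z /\ mul x z = z.

Definition has_zero : Prop := exists z, is_zero z.
End Defs.

(* S with a zero adjoined: carrier option T, None is the new zero. *)
Definition mul_adj0 {T : Type} (mul : T -> T -> T) (x y : option T) : option T :=
  match x, y with
  | Some a, Some b => Some (mul a b)
  | _, _ => None
  end.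

(* "S^0 is finitely right equated", unfolding S^0 by cases:
   S^0 = S if S has a zero, otherwise S with a zero adjoined. *)
Definition S0_fin_right_equated {T : Type} (mul : T -> T -> T) : Prop :=
  (has_zero T mul -> fin_right_equated T mul) /\
  (~ has_zero T mul -> fin_right_equated (option T) (mul_adj0 mul)).

(* x \in U S^1 = {u s | u \in U, s \in S^1}; since S^1 is S plus (possibly
   adjoined) identity, U S^1 = U \cup U S. *)
Definition in_US1 {T : Type} (mul : T -> T -> T) (U : list T) (x : T) : Prop :=
  exists u, In u U /\ (x = u \/ exists s, x = mul u s).

(* A right congruence generated by a finite set H of pairs relates an element
   only to itself unless both lie in the right ideal U S^1, U the entries of H.
   If S has a zero z, then r(z) is universal, so its finite generation gives
   S = U S^1; the same applied to the adjoined zero of S^0 gives the general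
   case, and r_S(a) is the restriction of r_{S^0}(a) to S.  Conversely,
   r_{S^0}(a) for a in S is generated by the generators of r_S(a), and the
   universal relation r(0) of S^0 by the pairs (u, 0), u in U. *)
From Stdlib Require Import List Classical.
Import ListNotations.

Section RightCongruence.
Variable T : Type.
Variable mul : T -> T -> T.
Hypothesis assoc : forall x y z, mul x (mul y z) = mul (mul x y) z.

Lemma gen_right_congruenceP (H : list (T * T)) :
  right_congruence T mul (gen_right_congruence T mul H).
Proof.
  split; [|split; [|split]]; unfold gen_right_congruence.
  - intros x rho [refl _] _; apply refl.
  - intros x y Hxy rho Hrho HH; apply Hrho, Hxy; assumption.
  - intros x y z Hxy Hyz rho Hrho HH.
    apply (proj1 (proj2 (proj2 Hrho)) x y z); [apply Hxy | apply Hyz]; assumption.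
  - intros x y c Hxy rho Hrho HH; apply Hrho, Hxy; assumption.
Qed.

Lemma gen_right_congruence_base (H : list (T * T)) (p : T * T) :
  In p H -> gen_right_congruence T mul H (fst p) (snd p).
Proof. intros Hp rho _ HH; exact (HH p Hp). Qed.

Lemma fg_right_congruence_by (rho : T -> T -> Prop) (H : list (T * T)) :
  right_congruence T mul rho ->
  (forall p, In p H -> rho (fst p) (snd p)) ->
  (forall x y, rho x y -> gen_right_congruence T mul H x y) ->
  forall x y, rho x y <-> gen_right_congruence T mul H x y.
Proof. intros Hrho HH Hgen x y; split; [apply Hgen | intro G; exact (G rho Hrho HH)]. Qed.

Lemma r_ann_right_congruence (a : T) : right_congruence T mul (r_ann T mul a).
Proof.
  unfold r_ann; split; [|split; [|split]]; [congruence.. |].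
  intros x y c E; rewrite !assoc, E; reflexivity.
Qed.

Lemma in_US1_mulr (U : list T) (x c : T) : in_US1 mul U x -> in_US1 mul U (mul x c).
Proof.
  intros (u & Hu & [-> | (s & ->)]); exists u; split; auto.
  - right; exists c; reflexivity.
  - right; exists (mul s c); symmetry; apply assoc.
Qed.

Definition entries (H : list (T * T)) : list T := map fst H ++ map snd H.

Lemma gen_right_congruence_in_US1 (H : list (T * T)) (x y : T) :
  gen_right_congruence T mul H x y ->
  x = y \/ (in_US1 mul (entries H) x /\ in_US1 mul (entries H) y).
Proof.
  intro G; apply G.
  - split; [|split; [|split]].
    + auto.
    + intros a b [E | [Ha Hb]]; auto.
    + intros a b c [-> | [Ha Hb]] [<- | [Hb' Hc]]; auto.
    + intros a b c [-> | [Ha Hb]]; auto using in_US1_mulr.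
  - intros [a b] Hp; right; unfold entries; split;
      [exists a | exists b]; (split; [|now left]); apply in_or_app;
      [left; exact (in_map fst _ _ Hp) | right; exact (in_map snd _ _ Hp)].
Qed.

Lemma US1_of_fg_r_ann_left_zero (z : T) :
  (forall x, mul z x = z) -> fg_right_congruence T mul (r_ann T mul z) ->
  exists U : list T, forall x, in_US1 mul U x.
Proof.
  intros Hz [H HH]; exists (z :: entries H); intro x.
  assert (G : gen_right_congruence T mul H x z)
    by (apply HH; unfold r_ann; rewrite !Hz; reflexivity).
  destruct (gen_right_congruence_in_US1 H x z G) as [-> | [(u & Hu & Hx) _]].
  - exists z; split; [now left | now left].
  - exists u; split; [now right | exact Hx].
Qed.

End RightCongruence.

Section AdjoinedZero.
Variable T : Type.
Variable mul : T -> T -> T.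
Hypothesis assoc : forall x y z, mul x (mul y z) = mul (mul x y) z.

Notation S0 := (option T).
Notation mul0 := (mul_adj0 mul).

Lemma mul_adj0_assoc (x y z : S0) : mul0 x (mul0 y z) = mul0 (mul0 x y) z.
Proof. destruct x, y, z; simpl; rewrite ?assoc; reflexivity. Qed.

Definition opt_rel (rho : T -> T -> Prop) (u v : S0) : Prop :=
  match u, v with
  | Some x, Some y => rho x y
  | None, None => True
  | _, _ => False
  end.

Lemma opt_rel_right_congruence (rho : T -> T -> Prop) :
  right_congruence T mul rho -> right_congruence S0 mul0 (opt_rel rho).
Proof.
  intros (refl & sym & trans & compat); split; [|split; [|split]].
  - intros [x|]; simpl; auto.
  - intros [x|] [y|]; simpl; auto.
  - intros [x|] [y|] [z|]; simpl; eauto; tauto.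
  - intros [x|] [y|] [c|]; simpl; auto.
Qed.

Lemma r_ann_adj0_Some (a : T) (u v : S0) :
  r_ann S0 mul0 (Some a) u v <-> opt_rel (r_ann T mul a) u v.
Proof.
  unfold r_ann; destruct u, v; simpl; split; intro E;
    try discriminate; try contradiction; try congruence; reflexivity.
Qed.

Lemma gen_right_congruence_map_Some (H : list (T * T)) (x y : T) :
  gen_right_congruence T mul H x y ->
  gen_right_congruence S0 mul0 (map (fun p => (Some (fst p), Some (snd p))) H)
    (Some x) (Some y).
Proof.
  intros G rho (refl & sym & trans & compat) HH.
  apply (G (fun u v => rho (Some u) (Some v))).
  - split; [|split; [|split]]; eauto.
    intros u v c; exact (compat _ _ (Some c)).
  - intros p Hp; exact (HH _ (in_map _ _ _ Hp)).
Qed.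

Definition somes {A : Type} (l : list (option A)) : list A :=
  flat_map (fun o => match o with Some a => [a] | None => [] end) l.

Lemma in_somes {A : Type} (l : list (option A)) (a : A) : In (Some a) l -> In a (somes l).
Proof. intro Ha; apply in_flat_map; exists (Some a); simpl; auto. Qed.

Definition pair_somes (H : list (S0 * S0)) : list (T * T) :=
  somes (map (fun p => match p with (Some s, Some t) => Some (s, t) | _ => None end) H).

Lemma in_pair_somes (H : list (S0 * S0)) (s t : T) :
  In (s, t) (pair_somes H) <-> In (Some s, Some t) H.
Proof.
  unfold pair_somes, somes; rewrite in_flat_map; split.
  - intros (o & Ho & Hst); apply in_map_iff in Ho as ([[s'|] [t'|]] & E & Hp);
      subst o; simpl in Hst; try contradiction.
    destruct Hst as [[= -> ->] | []]; exact Hp.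
  - intro Hp; exists (Some (s, t)); split; [exact (in_map _ _ _ Hp) | now left].
Qed.

Lemma in_US1_adj0_Some (U : list S0) (x : T) :
  in_US1 mul0 U (Some x) -> in_US1 mul (somes U) x.
Proof.
  intros (u & Hu & [<- | (s & E)]).
  - exists x; split; [apply in_somes, Hu | now left].
  - destruct u as [u|], s as [s|]; try discriminate; injection E as ->.
    exists u; split; [apply in_somes, Hu | right; exists s; reflexivity].
Qed.

Lemma fin_right_equated_of_adj0 :
  fin_right_equated S0 mul0 -> fin_right_equated T mul.
Proof.
  intros F a; destruct (F (Some a)) as [H0 HH0]; exists (pair_somes H0).
  assert (HH0r : forall p, In p H0 -> opt_rel (r_ann T mul a) (fst p) (snd p))
    by (intros p Hp; apply r_ann_adj0_Some, HH0, gen_right_congruence_base, Hp).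
  apply fg_right_congruence_by; [apply r_ann_right_congruence, assoc | |].
  - intros [s t] Hst; exact (HH0r _ (proj1 (in_pair_somes H0 s t) Hst)).
  - intros x y Hxy.
    assert (G : gen_right_congruence S0 mul0 H0 (Some x) (Some y))
      by (apply HH0, r_ann_adj0_Some; exact Hxy).
    apply (G (opt_rel (gen_right_congruence T mul (pair_somes H0))));
      [apply opt_rel_right_congruence, gen_right_congruenceP |].
    intros [[s|] [t|]] Hp; try exact (HH0r _ Hp).
    apply (gen_right_congruence_base _ _ _ (s, t)), in_pair_somes, Hp.
Qed.

Lemma r_ann_adj0_None_fg (U : list T) :
  (forall x, in_US1 mul U x) -> fg_right_congruence S0 mul0 (r_ann S0 mul0 None).
Proof.
  intro HU; set (H := map (fun u => (Some u, None : S0)) U); exists H.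
  destruct (gen_right_congruenceP S0 mul0 H) as (refl & sym & trans & compat).
  assert (Hzero : forall u, gen_right_congruence S0 mul0 H u None).
  { intros [x|]; [|apply refl].
    assert (Hu0 : forall u, In u U -> gen_right_congruence S0 mul0 H (Some u) None)
      by (intros u Hu; apply (gen_right_congruence_base _ _ H (Some u, None)),
            (in_map (fun u => (Some u, None : S0))), Hu).
    destruct (HU x) as (u & Hu & [-> | (s & ->)]); [exact (Hu0 u Hu) |].
    exact (compat _ _ (Some s) (Hu0 u Hu)). }
  intros u v; split; [intros _; eauto | reflexivity].
Qed.

Lemma fin_right_equated_adj0 (U : list T) :
  fin_right_equated T mul -> (forall x, in_US1 mul U x) ->
  fin_right_equated S0 mul0.
Proof.
  intros F HU [a|]; [|exact (r_ann_adj0_None_fg U HU)].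
  destruct (F a) as [H HH]; exists (map (fun p => (Some (fst p), Some (snd p))) H).
  apply fg_right_congruence_by;
    [apply r_ann_right_congruence, mul_adj0_assoc | |].
  - intros p Hp; apply in_map_iff in Hp as (q & <- & Hq).
    apply r_ann_adj0_Some, HH, gen_right_congruence_base, Hq.
  - intros [x|] [y|] Hxy; apply r_ann_adj0_Some in Hxy; simpl in Hxy;
      try contradiction.
    + apply gen_right_congruence_map_Some, HH, Hxy.
    + exact (proj1 (gen_right_congruenceP _ _ _) None).
Qed.

End AdjoinedZero.

Theorem mainTheorem10 (T : Type) (mul : T -> T -> T)
  (assoc : forall x y z, mul x (mul y z) = mul (mul x y) z) :
  S0_fin_right_equated mul <->
  (fin_right_equated T mul /\
   exists U : list T, forall x : T, in_US1 mul U x).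
Proof.
  split.
  - intros [Hzero Hnozero]; destruct (classic (has_zero T mul)) as [[z Hz] | Hnz].
    + pose proof (Hzero (ex_intro _ z Hz)) as F; split; [exact F |].
      exact (US1_of_fg_r_ann_left_zero T mul assoc z (fun x => proj1 (Hz x)) (F z)).
    + pose proof (Hnozero Hnz) as F.
      split; [exact (fin_right_equated_of_adj0 T mul assoc F) |].
      destruct (US1_of_fg_r_ann_left_zero _ _ (mul_adj0_assoc T mul assoc) None
                  (fun _ => eq_refl) (F None)) as [U0 HU0].
      exists (somes U0); intro x; exact (in_US1_adj0_Some T mul U0 x (HU0 (Some x))).
  - intros [F [U HU]]; split; intros _; [exact F |].
    exact (fin_right_equated_adj0 T mul assoc U F HU).
Qed.
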